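(* Let $n\ge 1$ and let $V,H$ be real $2n\times 2n$ symmetric positive-definite matrices with respective symplectic eigenvalues $\lambda_1^V\ge \lambda_2^V\ge\cdots\ge\lambda_n^V>0$ and $\lambda_1^H\ge\lambda_2^H\ge\cdots\ge\lambda_n^H>0$. Then \[ \inf_{S\in Sp(2n)} \operatorname{tr}(S V S^{T} H) \;=\; 2\sum_{i=1}^{n} \lambda_i^{H}\,\lambda_{n+1-i}^{V}. \]
   Context: Let $J=\begin{bmatrix}0 & \mathbb{I}_n\\ -\mathbb{I}_n & 0\end{bmatrix}$ and $Sp(2n)=\{S\in\mathbb{R}^{2n\times 2n}: S^T J S = J\}$ be the real symplectic group. By Williamson's theorem, for every real symmetric positive-definite $2n\times 2n$ matrix $M$ there is $S_M\in Sp(2n)$ with $S_M^T M S_M=\begin{bmatrix}\mathcal{D}_M & 0\\ 0&\mathcal{D}_M\end{bmatrix}$, where $\mathcal{D}_M=\operatorname{diag}(\lambda_1^M,\dots,\lambda_n^M)$, $\lambda_1^M\ge\cdots\ge\lambda_n^M>0$; these numbers $\lambda_i^M$ are the symplectic eigenvalues of $M$ (equivalently, $\pm i\lambda_i^M$ are the eigenvalues of $JM$). *)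

From HB Require Import structures.
From mathcomp Require Import all_boot all_order all_algebra.
From mathcomp Require Import all_classical all_reals.
Set Implicit Arguments. Unset Strict Implicit. Unset Printing Implicit Defensive.
Import Order.TTheory GRing.Theory Num.Theory.
Local Open Scope ring_scope.

Definition Jmx (R : realType) (n : nat) : 'M[R]_(n + n) :=
  block_mx 0 1%:M (- 1%:M) 0.

Definition symplectic (R : realType) (n : nat) (S : 'M[R]_(n + n)) : Prop :=
  S^T *m Jmx R n *m S = Jmx R n.

Definition sym_posdef (R : realType) (m : nat) (M : 'M[R]_m) : Prop :=
  M^T = M /\ forall x : 'cV[R]_m, x != 0 -> 0 < (x^T *m M *m x) 0 0.

(* d lists the symplectic eigenvalues of M in nonincreasing order,
   as given by Williamson's theorem: positive, nonincreasing, and some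
   symplectic S_M with S_M^T M S_M = diag(D, D), D = diag(d). *)
Definition symp_eigs (R : realType) (n : nat) (M : 'M[R]_(n + n))
    (d : 'I_n -> R) : Prop :=
  (forall i j : 'I_n, (i <= j)%N -> d j <= d i) /\
  (forall i, 0 < d i) /\
  exists S : 'M[R]_(n + n), symplectic S /\
    S^T *m M *m S = block_mx (diag_mx (\row_i d i)) 0 0 (diag_mx (\row_i d i)).

From HB Require Import structures.
From mathcomp Require Import all_boot all_order all_algebra.
From mathcomp Require Import all_classical all_reals.
From mathcomp Require Import fingroup perm lra zify.
Import Order.TTheory GRing.Theory Num.Theory.
Local Open Scope classical_set_scope.
Local Open Scope ring_scope.
Set Implicit Arguments. Unset Strict Implicit. Unset Printing Implicit Defensive.

(* Williamson normal forms reduce the claim to V = diag(D_V, D_V), H = diag(D_H, D_H):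
   S = S_H W S_V^T runs over Sp(2n) as W does, and tr(S V S^T H) = tr(W D_V W^T D_H).
   The value 2 sum_i dH_i dV_(n+1-i) is attained by the block permutation matrix that
   reverses the indices. For the lower bound, Abel summation writes a nonincreasing
   nonnegative d as a nonnegative combination of indicators of initial segments [0, l],
   so it suffices to treat the (doubled) coordinate projections P_k, P_l onto such
   segments; they commute with J, and tr(W P_l W^T P_k) = |P_k W P_l|_F^2. A dimension
   count gives an orthonormal family Y of r = 2 #{t | t <= k, n-1-t <= l} vectors with
   P_l Y = Y and P_k W Y = W Y. For X = P_k W P_l the symplectic form pairs X J Y with
   X Y perfectly, so Cauchy-Schwarz and Bessel's inequality give r <= |X|_F^2, and r is
   the value at the reversal. *)

Section SymplecticGroup.
Variables (R : realType) (n : nat).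
Local Notation J := (Jmx R n).

Lemma tr_Jmx : J^T = - J.
Proof.
by rewrite /Jmx tr_block_mx !trmx0 trmx1 raddfN /= trmx1 opp_block_mx !oppr0 opprK.
Qed.

Lemma Jmx_orthogonal : J^T *m J = 1%:M.
Proof.
rewrite tr_Jmx /Jmx opp_block_mx mulmx_block !oppr0 !mulmx0 !mul0mx !addr0 !add0r.
by rewrite mulNmx mulmxN !opprK !mulmx1 [RHS]scalar_mx_block.
Qed.

Lemma symplecticM (A B : 'M[R]_(n + n)) :
  symplectic A -> symplectic B -> symplectic (A *m B).
Proof.
by rewrite /symplectic trmx_mul => hA hB; rewrite !mulmxA -2!(mulmxA B^T) hA.
Qed.

Lemma symplectic_unitmx (A : 'M[R]_(n + n)) : symplectic A -> A \in unitmx.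
Proof.
move=> hA; have /mulmx1_unit[] // : (J^T *m A^T *m J) *m A = 1%:M.
by rewrite -!mulmxA (mulmxA A^T) hA Jmx_orthogonal.
Qed.

Lemma symplecticV (A : 'M[R]_(n + n)) : symplectic A -> symplectic (invmx A).
Proof.
move=> hA; have uA := symplectic_unitmx hA.
by rewrite /symplectic -{1}hA trmx_inv !mulmxA mulVmx ?unitmx_tr // mul1mx mulmxK.
Qed.

Lemma symplectic_tr (A : 'M[R]_(n + n)) : symplectic A -> symplectic A^T.
Proof.
move=> hA; rewrite /symplectic trmxK.
have : A *m (J^T *m A^T *m J) = 1%:M.
  by apply: mulmx1C; rewrite -!mulmxA (mulmxA A^T) hA Jmx_orthogonal.
move/(congr1 (mulmx^~ J^T)); rewrite !mulmxA -mulmxA (mulmx1C Jmx_orthogonal).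
by rewrite mulmx1 mul1mx tr_Jmx mulmxN mulNmx => /oppr_inj.
Qed.

Lemma symplectic_block_orthogonal (O : 'M[R]_n) :
  O^T *m O = 1%:M -> symplectic (block_mx O 0 0 O).
Proof.
move=> hO; rewrite /symplectic /Jmx tr_block_mx !trmx0 !mulmx_block.
by rewrite !mulmx0 !mul0mx !addr0 !add0r !mulmx1 mulmxN mulNmx mulmx1 hO mul0mx.
Qed.

End SymplecticGroup.

Section Frobenius.
Variable R : realType.

Definition sqfrob m n (A : 'M[R]_(m, n)) : R := \tr (A^T *m A).

Lemma sqfrob_ge0 m n (A : 'M[R]_(m, n)) : 0 <= sqfrob A.
Proof.
apply: sumr_ge0 => i _; rewrite mxE.
by apply: sumr_ge0 => j _; rewrite mxE -expr2 sqr_ge0.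
Qed.

Lemma mxtrace_mul_le_sqfrob m n (A B : 'M[R]_(m, n)) :
  2 * \tr (A^T *m B) <= sqfrob A + sqfrob B.
Proof.
have := sqfrob_ge0 (A - B).
rewrite /sqfrob [(A - B)^T]raddfB mulmxBl !mulmxBr !raddfB /=.
have -> : \tr (B^T *m A) = \tr (A^T *m B) by rewrite -mxtrace_tr trmx_mul trmxK.
lra.
Qed.

Lemma sqfrob_isometry m n (K : 'M[R]_m) (B : 'M[R]_(m, n)) :
  K^T *m K = 1%:M -> sqfrob (K *m B) = sqfrob B.
Proof. by move=> hK; rewrite /sqfrob trmx_mul mulmxA -(mulmxA B^T) hK mulmx1. Qed.

(* Bessel's inequality: [1 - Z Z^T] is an orthogonal projection. *)
Lemma sqfrob_frame_le m n r (X : 'M[R]_(m, n)) (Z : 'M[R]_(n, r)) :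
  Z^T *m Z = 1%:M -> sqfrob (X *m Z) <= sqfrob X.
Proof.
move=> hZ; set Q := 1%:M - Z *m Z^T.
have hQ : Q *m Q^T = Q.
  rewrite /Q raddfB /= trmx1 trmx_mul trmxK mulmxBl mul1mx mulmxBr mulmx1.
  by rewrite !mulmxA -(mulmxA Z) hZ mulmx1 subrr subr0.
suff <- : sqfrob (X *m Q) + sqfrob (X *m Z) = sqfrob X.
  by rewrite lerDr sqfrob_ge0.
rewrite /sqfrob trmx_mul mxtrace_mulC mulmxA -(mulmxA _ Q) hQ /Q.
rewrite mulmxBr mulmx1 mulmxBl raddfB /= (mxtrace_mulC X) trmx_mul.
have -> : \tr (X *m (Z *m Z^T) *m X^T) = \tr (Z^T *m X^T *m (X *m Z)).
  by rewrite mulmxA -mulmxA mxtrace_mulC.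
by rewrite subrK.
Qed.

End Frobenius.

Section OrthonormalFrames.
Variable R : realType.

Lemma rV_normalize N (v : 'rV[R]_N) :
  v != 0 -> exists c : R, (c *: v) *m (c *: v)^T = 1%:M.
Proof.
move=> v_neq0; set s := (v *m v^T) 0 0.
have s_gt0 : 0 < s.
  rewrite /s mxE; under eq_bigr do rewrite mxE -expr2.
  rewrite lt_def psumr_neq0 ?sumr_ge0 // => [|j _|j _]; try exact: sqr_ge0.
  rewrite andbT; apply: contraNT v_neq0 => /hasPn v0; apply/eqP/rowP => j.
  have := v0 j (mem_index_enum j); rewrite /= lt0r sqr_ge0 sqrf_eq0 andbT mxE.
  by move/negbNE/eqP.
exists (Num.sqrt s)^-1.
rewrite linearZ /= -scalemxAl -scalemxAr scalerA [v *m v^T]mx11_scalar -/s.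
by rewrite -invfM -expr2 sqr_sqrtr ?ltW // scale_scalar_mx mulVf ?gt_eqF.
Qed.

Lemma orthonormal_frame_sub N r (U : 'M[R]_N) : (r <= \rank U)%N ->
  exists Z : 'M[R]_(r, N), Z *m Z^T = 1%:M /\ (Z <= U)%MS.
Proof.
elim: r => [|r IHr] r_lt.
  by exists 0; rewrite sub0mx mul0mx; split=> //; apply/matrixP => [[]].
have [Z [Z_orth sZU]] := IHr (ltnW r_lt).
set K := (U :&: kermx Z^T)%MS.
have /rV_normalize[c y_unit] : nz_row K != 0.
  rewrite nz_row_eq0 -mxrank_eq0 -lt0n.
  have := mxrank_sum_cap U (kermx Z^T); rewrite mxrank_ker mxrank_tr.
  have := rank_leq_col (U + kermx Z^T)%MS; have := rank_leq_row Z; rewrite -/K; lia.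
have /andP[sKU /sub_kermxP yZ] : (c *: nz_row K <= U)%MS && (c *: nz_row K <= kermx Z^T)%MS.
  by rewrite -sub_capmx scalemx_sub ?nz_row_sub.
set y := c *: nz_row K in y_unit sKU yZ *.
exists (col_mx y Z); split.
  change (col_mx y Z *m (col_mx y Z)^T = 1%:M :> 'M_(1 + r)).
  rewrite tr_col_mx mul_col_row y_unit Z_orth yZ -[Z *m _]trmxK trmx_mul trmxK yZ.
  by rewrite trmx0 -scalar_mx_block.
by change ((col_mx y Z : 'M_(1 + r, N)) <= U)%MS; rewrite col_mx_sub sKU.
Qed.

Lemma orthonormal_frame_ker m p q r (A : 'M[R]_(p, m)) (B : 'M[R]_(q, m)) :
  (r + \rank A + \rank B <= m)%N ->
  exists Y : 'M[R]_(m, r), [/\ Y^T *m Y = 1%:M, A *m Y = 0 & B *m Y = 0].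
Proof.
move=> r_le; set U := (kermx A^T :&: kermx B^T)%MS.
have [|Z [Z_orth sZU]] := @orthonormal_frame_sub m r U.
  have := mxrank_sum_cap (kermx A^T) (kermx B^T); rewrite !mxrank_ker !mxrank_tr.
  have := rank_leq_col (kermx A^T + kermx B^T)%MS.
  have := rank_leq_col A; have := rank_leq_col B; rewrite -/U; lia.
move: sZU; rewrite sub_capmx => /andP[/sub_kermxP ZA /sub_kermxP ZB].
exists Z^T; rewrite trmxK Z_orth.
by split=> //; apply: trmx_inj; rewrite trmx_mul trmxK trmx0.
Qed.

End OrthonormalFrames.

Lemma mxtrace_mulmx_sum (R : comRingType) m (I : finType) (X Y : 'M[R]_m)
    (a b : I -> R) (A B : I -> 'M[R]_m) :
  \tr (X *m (\sum_l a l *: A l) *m Y *m (\sum_k b k *: B k))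
  = \sum_l \sum_k a l * b k * \tr (X *m A l *m Y *m B k).
Proof.
rewrite mulmx_sumr raddf_sum [RHS]exchange_big; apply: eq_bigr => k _.
rewrite mulmx_sumr !mulmx_suml raddf_sum; apply: eq_bigr => l _.
by rewrite -!scalemxAr -!scalemxAl scalerA /= mxtraceZ [b k * _]mulrC.
Qed.

Lemma mxrank_diag_mx_le (F : fieldType) n (r : 'rV[F]_n) :
  (\rank (diag_mx r) <= \sum_i (r ord0 i != 0%R))%N.
Proof.
rewrite diag_mx_sum_delta.
elim/big_rec2: _ => [|i k A _ rA]; first by rewrite mxrank0.
apply: leq_trans (mxrank_add _ _) (leq_add _ rA).
have [->|_] := eqP; first by rewrite scale0r mxrank0.
by rewrite (leq_trans (mxrank_scale _ _)) ?mxrank_delta.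
Qed.

Section LayerCake.
Variables (R : numDomainType) (n : nat).

Definition ind_le (k i : 'I_n) : R := (i <= k)%:R.

(* Extension by zero beyond [n], so that [jump x] needs no special last case. *)
Definition ext0 (x : 'I_n -> R) (m : nat) : R := oapp x 0 (insub m).

Definition jump (x : 'I_n -> R) (l : 'I_n) : R := ext0 x l - ext0 x l.+1.

Lemma ext0_ord x (i : 'I_n) : ext0 x i = x i.
Proof. by rewrite /ext0 valK. Qed.

Lemma ext0_ge x m : (n <= m)%N -> ext0 x m = 0.
Proof. by move=> le_nm; rewrite /ext0 insubF // ltnNge le_nm. Qed.

Lemma layer_cake x i : x i = \sum_l jump x l * ind_le l i.
Proof.
under eq_bigr do rewrite /ind_le mulr_natr mulrb.
rewrite -big_mkcond /=.
have -> : \sum_(l < n | (i <= l)%N) jump x l = \sum_(i <= l < n) (ext0 x l - ext0 x l.+1).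
  by rewrite big_geq_mkord; apply: eq_big.
rewrite -[RHS]opprK -sumrN; under eq_bigr do rewrite opprB.
rewrite telescope_sumr; last exact: ltnW.
by rewrite ext0_ge // ext0_ord sub0r opprK.
Qed.

Lemma jump_ge0 x : (forall i j : 'I_n, (i <= j)%N -> x j <= x i) ->
  (forall i, 0 <= x i) -> forall l, 0 <= jump x l.
Proof.
move=> x_noninc x_ge0 l; rewrite subr_ge0 ext0_ord.
have [lt_l1n|le_nl1] := ltnP l.+1 n; last by rewrite ext0_ge.
by rewrite -[l.+1]/(val (Ordinal lt_l1n)) ext0_ord x_noninc.
Qed.

End LayerCake.

Section DiagonalForm.
Variables (R : realType) (n : nat).
Local Notation J := (Jmx R n).

Definition diag2_mx (d : 'I_n -> R) : 'M[R]_(n + n) :=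
  block_mx (diag_mx (\row_i d i)) 0 0 (diag_mx (\row_i d i)).

Lemma diag2_mx_tr d : (diag2_mx d)^T = diag2_mx d.
Proof. by rewrite tr_block_mx !trmx0 tr_diag_mx. Qed.

Lemma diag2_mxM d e : diag2_mx d *m diag2_mx e = diag2_mx (fun i => d i * e i).
Proof.
rewrite mulmx_block !mulmx0 !mul0mx !addr0 !add0r mulmx_diag.
by rewrite /diag2_mx; congr block_mx; congr diag_mx; apply/rowP => i; rewrite !mxE.
Qed.

Lemma Jmx_diag2_mx d : J *m diag2_mx d = diag2_mx d *m J.
Proof.
rewrite !mulmx_block !mulmx0 !mul0mx !addr0 !add0r !mulmx1 !mul1mx.
by rewrite mulNmx mulmxN mul1mx mulmx1.
Qed.

Lemma diag2_mx_compl d : 1%:M - diag2_mx d = diag2_mx (fun i => 1 - d i).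
Proof.
rewrite [1%:M]scalar_mx_block opp_block_mx add_block_mx !subr0 -diag_const_mx.
by rewrite -raddfB /diag2_mx; congr block_mx; congr diag_mx; apply/rowP => i; rewrite !mxE.
Qed.

Lemma diag2_mx_sum (I : finType) (c : I -> R) (u : I -> 'I_n -> R) :
  diag2_mx (fun i => \sum_l c l * u l i) = \sum_l c l *: diag2_mx (u l).
Proof.
rewrite /diag2_mx; have -> : \row_i (\sum_l c l * u l i) = \sum_l c l *: \row_i u l i.
  by apply/rowP => i; rewrite summxE mxE; apply: eq_bigr => l _; rewrite !mxE.
rewrite raddf_sum /=.
elim/big_rec2: _ => [|l B A _ <-]; first by rewrite block_mx0.
by rewrite linearZ /= scale_block_mx scaler0 add_block_mx addr0.
Qed.

Lemma mxtrace_diag2_mx d : \tr (diag2_mx d) = 2 * \sum_i d i.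
Proof.
rewrite mxtrace_block mxtrace_diag; under eq_bigr do rewrite mxE.
by rewrite mulr2n mulrDl mul1r.
Qed.

Lemma mxrank_diag2_mx d : (\rank (diag2_mx d) <= 2 * \sum_i (d i != 0%R))%N.
Proof.
rewrite rank_diag_block_mx mul2n -addnn.
have := mxrank_diag_mx_le (\row_i d i); under eq_bigr do rewrite mxE.
by move=> le_d; apply: leq_add.
Qed.

End DiagonalForm.

Definition rev_perm n : 'S_n := perm (@rev_ord_inj n).

Section SymplecticTraceBound.
Variables (R : realType) (n : nat).
Local Notation J := (Jmx R n).
Local Notation ind_le := (@ind_le R n).

Lemma sqfrob_compression_ge r (W P Q : 'M[R]_(n + n)) (Y : 'M[R]_(n + n, r)) :
    symplectic W -> P^T = P -> J *m P = P *m J -> J *m Q = Q *m J ->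
    Y^T *m Y = 1%:M -> Q *m Y = Y -> P *m (W *m Y) = W *m Y ->
  r%:R <= sqfrob (P *m W *m Q).
Proof.
move=> W_symp P_sym JP JQ Y_orth QY PWY; set X := P *m W *m Q.
have XY : X *m Y = W *m Y by rewrite /X -!mulmxA QY.
have XJY : X *m (J *m Y) = P *m (W *m (J *m Y)).
  by rewrite /X -!mulmxA (mulmxA Q) -JQ -mulmxA QY.
have JY_orth : (J *m Y)^T *m (J *m Y) = 1%:M.
  by rewrite trmx_mul mulmxA -(mulmxA Y^T) Jmx_orthogonal mulmx1.
have pairing : (X *m (J *m Y))^T *m (J *m (X *m Y)) = 1%:M.
  rewrite XJY XY !trmx_mul P_sym -!mulmxA (mulmxA P) -JP -mulmxA PWY.
  by rewrite !mulmxA -(mulmxA _ W^T) -(mulmxA _ _ W) W_symp -(mulmxA Y^T) Jmx_orthogonal mulmx1.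
have := mxtrace_mul_le_sqfrob (X *m (J *m Y)) (J *m (X *m Y)).
rewrite pairing mxtrace1 (sqfrob_isometry (X *m Y) (Jmx_orthogonal R n)).
have := sqfrob_frame_le X JY_orth; have := sqfrob_frame_le X Y_orth; lra.
Qed.

Definition overlap (k l : 'I_n) : nat := \sum_(t < n) ((t <= k) && (rev_ord t <= l)).

Lemma overlap_count (k l : 'I_n) : (0 < overlap k l)%N ->
  (overlap k l + \sum_(t < n) (k < t) + \sum_(t < n) (l < t) <= n)%N.
Proof.
rewrite lt0n sum_nat_eq0 negb_forall => /existsP[t0]; rewrite /= eqb0 negbK => /andP[t0k t0l].
rewrite [X in (_ + X <= _)%N](reindex_inj rev_ord_inj) -!big_split /=.
rewrite -[n in (_ <= n)%N]card_ord -sum1_card leq_sum // => t _.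
move: t0k t0l; have := ltn_ord t; have := ltn_ord t0; rewrite /=.
by case: (leqP t k); case: (leqP (n - t.+1) l) => /=; lia.
Qed.

Lemma mxrank_compl_ind_le k :
  (\rank (1%:M - diag2_mx (ind_le k))%R <= 2 * \sum_(t < n) (k < t))%N.
Proof.
rewrite diag2_mx_compl (leq_trans (mxrank_diag2_mx _)) // leq_mul2l leq_sum ?orbT // => t _.
by rewrite /ind_le; case: leqP; rewrite ?subrr ?eqxx ?subr0 ?oner_eq0.
Qed.

Lemma sqfrob_ind_le_ge (W : 'M[R]_(n + n)) k l : symplectic W ->
  (2 * overlap k l)%:R <= sqfrob (diag2_mx (ind_le k) *m W *m diag2_mx (ind_le l)).
Proof.
move=> W_symp; have [->|overlap_gt0] := posnP (overlap k l).
  by rewrite muln0 sqfrob_ge0.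
set P := diag2_mx (ind_le k); set Q := diag2_mx (ind_le l).
have [|Y [Y_orth QY PWY]] :=
  orthonormal_frame_ker (r := 2 * overlap k l) (A := 1%:M - Q) (B := (1%:M - P) *m W).
  have rP : (\rank ((1%:M - P) *m W) <= 2 * \sum_(t < n) (k < t))%N.
    exact: leq_trans (mxrankM_maxl _ _) (mxrank_compl_ind_le k).
  have := mxrank_compl_ind_le l; have := overlap_count overlap_gt0; rewrite -/Q; lia.
apply: (sqfrob_compression_ge W_symp _ _ _ Y_orth); rewrite ?diag2_mx_tr ?Jmx_diag2_mx //.
  by apply/eqP; rewrite eq_sym -subr_eq0 -{1}[Y]mul1mx -mulmxBl QY.
by apply/eqP; rewrite eq_sym -subr_eq0 -{1}[W *m Y]mul1mx -mulmxBl mulmxA PWY.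
Qed.

Definition perm2_mx (s : 'S_n) : 'M[R]_(n + n) :=
  block_mx (perm_mx s) 0 0 (perm_mx s).

Lemma symplectic_perm2_mx s : symplectic (perm2_mx s).
Proof.
by apply: symplectic_block_orthogonal; rewrite tr_perm_mx -perm_mxM mulVg perm_mx1.
Qed.

Lemma perm2_mx_conj s d :
  perm2_mx s *m diag2_mx d *m (perm2_mx s)^T = diag2_mx (fun i => d (s i)).
Proof.
have conj_diag : perm_mx s *m diag_mx (\row_i d i) *m (perm_mx s)^T
                 = diag_mx (\row_i d (s i)).
  rewrite -row_permE tr_perm_mx -col_permE; apply/matrixP => i j.
  by rewrite !mxE (inj_eq perm_inj).
rewrite tr_block_mx !trmx0 !mulmx_block !mulmx0 !mul0mx !addr0 !add0r.
by rewrite !mul0mx conj_diag.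
Qed.

Lemma mxtrace_perm2_conj s d e :
  \tr (perm2_mx s *m diag2_mx d *m (perm2_mx s)^T *m diag2_mx e)
  = 2 * \sum_i d (s i) * e i.
Proof. by rewrite perm2_mx_conj diag2_mxM mxtrace_diag2_mx. Qed.

Lemma mxtrace_ind_le_ge (W : 'M[R]_(n + n)) k l : symplectic W ->
  \tr (perm2_mx (rev_perm n) *m diag2_mx (ind_le l) *m (perm2_mx (rev_perm n))^T
       *m diag2_mx (ind_le k))
  <= \tr (W *m diag2_mx (ind_le l) *m W^T *m diag2_mx (ind_le k)).
Proof.
move=> W_symp; have idem j : diag2_mx (ind_le j) *m diag2_mx (ind_le j) = diag2_mx (ind_le j).
  by rewrite diag2_mxM; congr diag2_mx; apply: funext => i; rewrite /ind_le -natrM mulnb andbb.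
have -> : \tr (W *m diag2_mx (ind_le l) *m W^T *m diag2_mx (ind_le k))
          = sqfrob (diag2_mx (ind_le k) *m W *m diag2_mx (ind_le l)).
  rewrite /sqfrob !trmx_mul !diag2_mx_tr !mulmxA.
  rewrite -(mulmxA _ (diag2_mx (ind_le k)) (diag2_mx (ind_le k))) idem.
  by rewrite [RHS]mxtrace_mulC !mulmxA idem [RHS]mxtrace_mulC !mulmxA.
apply: le_trans (sqfrob_ind_le_ge k l W_symp).
rewrite mxtrace_perm2_conj natrM natr_sum ler_pM2l ?ler_sum // => t _.
by rewrite permE /ind_le -natrM mulnb andbC.
Qed.

Lemma mxtrace_rev_le (W : 'M[R]_(n + n)) (d e : 'I_n -> R) : symplectic W ->
    (forall i j : 'I_n, (i <= j)%N -> d j <= d i) -> (forall i, 0 <= d i) ->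
    (forall i j : 'I_n, (i <= j)%N -> e j <= e i) -> (forall i, 0 <= e i) ->
  \tr (perm2_mx (rev_perm n) *m diag2_mx d *m (perm2_mx (rev_perm n))^T *m diag2_mx e)
  <= \tr (W *m diag2_mx d *m W^T *m diag2_mx e).
Proof.
move=> W_symp d_noninc d_ge0 e_noninc e_ge0.
have layers x : diag2_mx x = \sum_l jump x l *: diag2_mx (ind_le l).
  by rewrite -diag2_mx_sum; congr diag2_mx; apply: funext => i; rewrite -layer_cake.
rewrite [diag2_mx d]layers [diag2_mx e]layers !mxtrace_mulmx_sum.
apply: ler_sum => l _; apply: ler_sum => k _.
by rewrite ler_wpM2l ?mulr_ge0 ?jump_ge0 ?mxtrace_ind_le_ge.
Qed.

End SymplecticTraceBound.

Lemma mxtrace_change_basis (R : comRingType) m (V H SV SH W V' H' : 'M[R]_m) :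
    SV^T *m V *m SV = V' -> SH^T *m H *m SH = H' ->
  \tr (SH *m W *m SV^T *m V *m (SH *m W *m SV^T)^T *m H)
  = \tr (W *m V' *m W^T *m H').
Proof.
move=> <- <-; rewrite !trmx_mul trmxK -!mulmxA mxtrace_mulC !mulmxA.
by rewrite -(mulmxA (W *m SV^T)) -(mulmxA W) (mulmxA SV^T) -!mulmxA (mulmxA SH^T) !mulmxA.
Qed.

Theorem theorem1 (R : realType) (n : nat) (hn : (0 < n)%N)
    (V H : 'M[R]_(n + n)) (dV dH : 'I_n -> R) :
  sym_posdef V -> sym_posdef H ->
  symp_eigs V dV -> symp_eigs H dH ->
  inf [set t : R | exists S : 'M[R]_(n + n),
                     symplectic S /\ t = \tr (S *m V *m S^T *m H)]
  = 2 * \sum_(i < n) dH i * dV (rev_ord i).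
Proof.
move=> _ _ [dV_noninc [dV_gt0 [SV [SV_symp eV]]]] [dH_noninc [dH_gt0 [SH [SH_symp eH]]]].
set E := [set t | _]; set v := 2 * _; set W0 := perm2_mx R (rev_perm n).
have value : \tr (W0 *m diag2_mx dV *m W0^T *m diag2_mx dH) = v.
  by rewrite mxtrace_perm2_conj; congr (_ * _); apply: eq_bigr => i _; rewrite permE mulrC.
have E_v : E v.
  exists (SH *m W0 *m SV^T); rewrite (mxtrace_change_basis _ eV eH) value; split=> //.
  exact: symplecticM (symplecticM SH_symp (symplectic_perm2_mx _ _)) (symplectic_tr SV_symp).
have v_lb : lbound E v.
  move=> _ [S [S_symp ->]]; set W := invmx SH *m S *m invmx SV^T.
  have W_symp : symplectic W.
    exact: symplecticM (symplecticM (symplecticV SH_symp) S_symp) (symplecticV (symplectic_tr SV_symp)).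
  have -> : S = SH *m W *m SV^T.
    by rewrite /W !mulmxA mulmxV ?symplectic_unitmx // mul1mx mulmxKV ?unitmx_tr ?symplectic_unitmx.
  rewrite (mxtrace_change_basis _ eV eH) -value.
  by apply: mxtrace_rev_le => // i; apply: ltW.
by apply/eqP; rewrite eq_le ge_inf ?lb_le_inf //; exists v.
Qed.
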